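(* Let $k\ge2$ be an integer and $p$ an odd prime not dividing $k$. Let $$F(t)={}_{k-1}F_{k-2}\left(\tfrac1k,\tfrac2k,\ldots,\tfrac{k-1}{k};1,1,\ldots,1\,\middle|\,t\right)=\sum_{n\ge0}\frac{(\frac1k)_n(\frac2k)_n\cdots(\frac{k-1}{k})_n}{(n!)^{k-1}}t^n .$$ Then $F(t)\in\mathbb{Z}_p[[t]]$ and for all integers $s\ge1$, $$\frac{F(t)}{F(t^p)}\equiv \frac{F_{p^s}(t)}{F_{p^{s-1}}(t^p)}\pmod{p^s},$$ as power series in $\mathbb{Z}_p[[t]]$ (coefficientwise).
   Context: $(a)_n=a(a+1)\cdots(a+n-1)$ denotes the Pochhammer symbol; there are $k-1$ upper parameters $\frac1k,\dots,\frac{k-1}k$ and $k-2$ lower parameters all equal to $1$. For a power series $G(t)$ and an integer $m\ge1$, $G_m(t)$ denotes its truncation: all terms of degree $\ge m$ are deleted; $G_m(t^p)$ denotes this truncation with $t$ replaced by $t^p$. *)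

From mathcomp Require Import all_boot all_algebra.
Set Implicit Arguments. Unset Strict Implicit. Unset Printing Implicit Defensive.
Import GRing.Theory Num.Theory.
Local Open Scope ring_scope.

Definition series := nat -> rat.

Definition pochhammer (a : rat) (n : nat) : rat := \prod_(i < n) (a + i%:R).

Definition hypF (k : nat) : series := fun n =>
  (\prod_(1 <= j < k) pochhammer (j%:R / k%:R) n) / (n`!%:R) ^+ (k - 1).

Definition smul (f g : series) : series :=
  fun n => \sum_(i < n.+1) f i * g (n - i)%N.

(* G_m(t): delete all terms of degree >= m. *)
Definition strunc (m : nat) (f : series) : series :=
  fun n => if (n < m)%N then f n else 0.

Definition subst_pow (p : nat) (f : series) : series :=
  fun n => if (p %| n)%N then f (n %/ p)%N else 0.

(* First n+1 coefficients of the multiplicative inverse of f (f 0 <> 0). *)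
Fixpoint inv_seq (f : series) (n : nat) : seq rat :=
  match n with
  | 0 => [:: (f 0%N)^-1]
  | n'.+1 => let s := inv_seq f n' in
      rcons s (- (\sum_(i < n'.+1) f i.+1 * nth 0 s (n' - i)%N) / f 0%N)
  end.

Definition sinv (f : series) : series := fun n => nth 0 (inv_seq f n) n.

Definition sdiv (f g : series) : series := smul f (sinv g).

Definition p_integral (p : nat) (x : rat) : bool := ~~ (p %| `|denq x|)%N.

Definition congr_mod_pow (p s : nat) (x y : rat) : bool :=
  p_integral p ((x - y) / (p ^ s)%N%:R).

(* Dwork's method.  Here hypF k n = (kn)! / (k^(kn) (n!)^k), and Legendre's splitting
   m! = p^(m div p) (m div p)! * (product of the p-free integers <= m) turns the last
   base-p digit into a factorization A (b + p n) = A n * R_b n for A := hypF k and b < p.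
   Products of the p-free integers over any p^e consecutive integers agree mod p^e, and
   Euler's theorem controls the powers of k, so R_b (n + m p^e) = R_b n mod p^(e+1).
   Dwork's congruence lemma then shows, by induction on s, that
     sum_(i + j = N) A i A j ([j < p^(s-1)] - [i < p^(s-1)]) X i Y j = 0 mod p^s
   for all such X and Y.  The coefficient of t^N in F(t) F_(p^(s-1))(t^p) - F(t^p) F_(p^s)(t)
   is this sum at N div p with X = R_(N mod p) and Y = 1, and dividing by F(t^p) and
   F_(p^(s-1))(t^p), which are 1 + O(t) with p-integral coefficients, keeps the congruence. *)

From mathcomp Require Import all_boot all_algebra cyclic.
From mathcomp Require Import zify ring.
Set Implicit Arguments. Unset Strict Implicit. Unset Printing Implicit Defensive.
Import GRing.Theory Num.Theory.
Local Open Scope ring_scope.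

Section PIntegral.

Variable p : nat.
Hypothesis p_pr : prime p.

Lemma natr_ndvd_neq0 b : ~~ (p %| b)%N -> (b%:R : rat) != 0.
Proof. by rewrite pnatr_eq0; apply: contraNneq => ->. Qed.

Lemma p_integralP x :
  reflect (exists a : int, exists2 b : nat, ~~ (p %| b)%N & x = a%:~R / b%:R)
          (p_integral p x).
Proof.
apply: (iffP idP) => [pd | [a [b pb ->]]].
  exists (numq x), `|denq x|%N => //.
  by rewrite -[in LHS](divq_num_den x) -[denq x]gez0_abs ?ltW ?denq_gt0.
set y : rat := a%:~R / b%:R.
have /(congr1 absz) : numq y * b%:Z = a * denq y.
  apply/eqP; rewrite -(eqr_int rat) !rmorphM /= numqE /y.
  by rewrite mulrAC -[b%:~R]/(b%:R : rat) divfK ?natr_ndvd_neq0.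
rewrite !abszM /= => yb.
have : (`|denq y| %| `|numq y| * b)%N by rewrite yb dvdn_mull.
rewrite Gauss_dvdr 1?coprime_sym ?coprime_num_den // => den_b.
by apply: contra pb => /dvdn_trans; apply.
Qed.

Lemma p_integral_int (a : int) : p_integral p a%:~R.
Proof.
apply/p_integralP; exists a, 1%N; last by rewrite divr1.
by rewrite dvdn1 neq_ltn prime_gt1 ?orbT.
Qed.

Lemma p_integral_nat n : p_integral p n%:R.
Proof. exact: (p_integral_int n). Qed.

Lemma p_integral0 : p_integral p 0. Proof. exact: (p_integral_nat 0). Qed.
Lemma p_integral1 : p_integral p 1. Proof. exact: (p_integral_nat 1). Qed.

Lemma p_integral_divn x b : ~~ (p %| b)%N -> p_integral p x -> p_integral p (x / b%:R).
Proof.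
move=> pb /p_integralP[a [c pc ->]]; apply/p_integralP; exists a, (c * b)%N.
  by rewrite Euclid_dvdM // negb_or pc.
by rewrite natrM invfM mulrA.
Qed.

Lemma p_integralM x y : p_integral p x -> p_integral p y -> p_integral p (x * y).
Proof.
move=> /p_integralP[a [b pb ->]] /p_integralP[c [d pd ->]].
apply/p_integralP; exists (a * c), (b * d)%N.
  by rewrite Euclid_dvdM // negb_or pb.
by rewrite natrM invfM rmorphM /=; ring.
Qed.

Lemma p_integralD x y : p_integral p x -> p_integral p y -> p_integral p (x + y).
Proof.
move=> /p_integralP[a [b pb ->]] /p_integralP[c [d pd ->]].
apply/p_integralP; exists (a * d%:Z + c * b%:Z), (b * d)%N.
  by rewrite Euclid_dvdM // negb_or pb.
have := natr_ndvd_neq0 pb; have := natr_ndvd_neq0 pd => d0 b0.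
by rewrite natrM rmorphD !rmorphM /= !pmulrn; field; rewrite d0 b0.
Qed.

Lemma p_integralN x : p_integral p x -> p_integral p (- x).
Proof.
by move=> /p_integralP[a [b pb ->]]; apply/p_integralP; exists (- a), b; rewrite ?mulrNz ?mulNr.
Qed.

Lemma p_integralB x y : p_integral p x -> p_integral p y -> p_integral p (x - y).
Proof. by move=> px py; apply: p_integralD => //; apply: p_integralN. Qed.

Lemma p_integral_sum I (r : seq I) (P : pred I) (F : I -> rat) :
  (forall i, P i -> p_integral p (F i)) -> p_integral p (\sum_(i <- r | P i) F i).
Proof.
by move=> pF; apply: (big_ind (p_integral p)) => //; [apply: p_integral0 | apply: p_integralD].
Qed.

Lemma p_integral_prod I (r : seq I) (P : pred I) (F : I -> rat) :
  (forall i, P i -> p_integral p (F i)) -> p_integral p (\prod_(i <- r | P i) F i).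
Proof.
by move=> pF; apply: (big_ind (p_integral p)) => //; [apply: p_integral1 | apply: p_integralM].
Qed.

Lemma p_integralX x n : p_integral p x -> p_integral p (x ^+ n).
Proof. by move=> px; rewrite -(subn0 n) -prodr_const_nat; apply: p_integral_prod. Qed.

End PIntegral.

Section Congruences.

Variable p : nat.
Hypothesis p_pr : prime p.

Definition p_multiple (e : nat) (x : rat) : bool := p_integral p (x / (p ^ e)%N%:R).

Lemma natr_pexp_neq0 e : ((p ^ e)%N%:R : rat) != 0.
Proof. by rewrite pnatr_eq0 -lt0n expn_gt0 prime_gt0. Qed.

Lemma p_multiple_exp0 x : p_multiple 0 x = p_integral p x.
Proof. by rewrite /p_multiple expn0 divr1. Qed.

Lemma p_multiple0 e : p_multiple e 0.
Proof. by rewrite /p_multiple mul0r; apply: p_integral0. Qed.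

Lemma p_multipleD e x y : p_multiple e x -> p_multiple e y -> p_multiple e (x + y).
Proof. by rewrite /p_multiple mulrDl; apply: p_integralD. Qed.

Lemma p_multipleN e x : p_multiple e x -> p_multiple e (- x).
Proof. by rewrite /p_multiple mulNr; apply: p_integralN. Qed.

Lemma p_multiple_sum e I (r : seq I) (P : pred I) (F : I -> rat) :
  (forall i, P i -> p_multiple e (F i)) -> p_multiple e (\sum_(i <- r | P i) F i).
Proof.
by move=> pF; apply: (big_ind (p_multiple e)) => //; [apply: p_multiple0 | apply: p_multipleD].
Qed.

Lemma p_multipleMl e a x : p_integral p a -> p_multiple e x -> p_multiple e (a * x).
Proof. by rewrite /p_multiple -mulrA; apply: p_integralM. Qed.

Lemma p_multipleMr e a x : p_integral p a -> p_multiple e x -> p_multiple e (x * a).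
Proof. by rewrite mulrC; apply: p_multipleMl. Qed.

Lemma p_multipleM e f x y :
  p_multiple e x -> p_multiple f y -> p_multiple (e + f) (x * y).
Proof.
rewrite /p_multiple expnD natrM invfM mulrACA; exact: p_integralM.
Qed.

Lemma p_multiple_le e f x : (f <= e)%N -> p_multiple e x -> p_multiple f x.
Proof.
move=> /subnK <- /(p_integralM p_pr) /(_ (p_integral_nat p_pr (p ^ (e - f)))).
by rewrite expnD natrM invfM mulrA mulrAC divfK ?natr_pexp_neq0.
Qed.

Lemma p_multiple_pexp e x : p_integral p x -> p_multiple e ((p ^ e)%N%:R * x).
Proof. by rewrite /p_multiple mulrAC divff ?natr_pexp_neq0 ?mul1r. Qed.

Lemma p_multiple_divn e x b : ~~ (p %| b)%N -> p_multiple e x -> p_multiple e (x / b%:R).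
Proof. by move=> pb; rewrite /p_multiple mulrAC; apply: p_integral_divn. Qed.

Lemma congr_mod_refl e x : congr_mod_pow p e x x.
Proof. by rewrite /congr_mod_pow subrr; apply: p_multiple0. Qed.

Lemma congr_mod_sym e x y : congr_mod_pow p e x y -> congr_mod_pow p e y x.
Proof. by move=> /p_multipleN; rewrite /congr_mod_pow opprB. Qed.

Lemma congr_mod_trans e x y z :
  congr_mod_pow p e x y -> congr_mod_pow p e y z -> congr_mod_pow p e x z.
Proof. by move=> /p_multipleD xy /xy; rewrite /congr_mod_pow addrA subrK. Qed.

Lemma congr_modM e x y x' y' : p_integral p x -> p_integral p y' ->
  congr_mod_pow p e x x' -> congr_mod_pow p e y y' -> congr_mod_pow p e (x * y) (x' * y').
Proof.
move=> px py' xx' yy'; rewrite /congr_mod_pow.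
have -> : x * y - x' * y' = x * (y - y') + (x - x') * y' by ring.
by apply: p_multipleD; [apply: p_multipleMl | apply: p_multipleMr].
Qed.

Lemma congr_mod_prod e I (r : seq I) (P : pred I) (F G : I -> rat) :
  (forall i, P i -> p_integral p (F i)) -> (forall i, P i -> p_integral p (G i)) ->
  (forall i, P i -> congr_mod_pow p e (F i) (G i)) ->
  congr_mod_pow p e (\prod_(i <- r | P i) F i) (\prod_(i <- r | P i) G i).
Proof.
move=> pF pG FG; elim: r => [|a r IH]; first by rewrite !big_nil; apply: congr_mod_refl.
rewrite !big_cons; case: ifP => // Pa.
apply: congr_modM => //; [exact: pF | exact: p_integral_prod | exact: FG].
Qed.

Lemma congr_modX e x y n : p_integral p x -> p_integral p y ->
  congr_mod_pow p e x y -> congr_mod_pow p e (x ^+ n) (y ^+ n).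
Proof. by move=> px py xy; rewrite -(subn0 n) -!prodr_const_nat; apply: congr_mod_prod. Qed.

Lemma congr_mod_le e f x y : (f <= e)%N -> congr_mod_pow p e x y -> congr_mod_pow p f x y.
Proof. exact: p_multiple_le. Qed.

Lemma congr_mod_nat e m n : (m = n %[mod p ^ e])%N -> congr_mod_pow p e m%:R n%:R.
Proof.
move=> mn; rewrite /congr_mod_pow /p_multiple.
have -> : (m%:R - n%:R : rat) = ((m %/ p ^ e)%N%:R - (n %/ p ^ e)%N%:R) * (p ^ e)%N%:R.
  by rewrite {1}(divn_eq m (p ^ e)) {1}(divn_eq n (p ^ e)) mn !natrD !natrM; ring.
by rewrite mulfK ?natr_pexp_neq0 //; apply: (p_integralB p_pr); apply: (p_integral_nat p_pr).
Qed.

Lemma congr_mod_div e x y x' y' : ~~ (p %| y)%N -> ~~ (p %| y')%N ->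
  congr_mod_pow p e (x * y'%:R) (x' * y%:R) -> congr_mod_pow p e (x / y%:R) (x' / y'%:R).
Proof.
move=> py py' /(p_multiple_divn py) /(p_multiple_divn py').
have := natr_ndvd_neq0 py; have := natr_ndvd_neq0 py' => y'0 y0.
by congr p_multiple; field; rewrite y0 y'0.
Qed.

Lemma congr_mod_cancel e x y (u : nat) : ~~ (p %| u)%N ->
  congr_mod_pow p e (x * u%:R) (y * u%:R) -> congr_mod_pow p e x y.
Proof.
move=> pu xy; rewrite /congr_mod_pow -(mulfK (natr_ndvd_neq0 pu) (x - y)) mulrBl.
exact: p_multiple_divn.
Qed.

End Congruences.

Lemma sum_eq_indicator P c (F : nat -> rat) : (c < P)%N ->
  \sum_(0 <= i < P) (i == c)%:R * F i = F c.
Proof.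
move=> cP; rewrite (bigD1_seq c) ?mem_index_iota ?iota_uniq //= eqxx mul1r.
by rewrite big1_seq ?addr0 // => i /andP[/negbTE -> _]; rewrite mul0r.
Qed.

Lemma ltn_add_pmul P Q u c : (c < P)%N -> (c + P * u < P * Q)%N = (u < Q)%N.
Proof. by move=> cP; apply/idP/idP; nia. Qed.

Lemma sum_antidiag B N (F : nat -> nat -> rat) : (N < B)%N ->
  \sum_(0 <= i < B) \sum_(0 <= j < B) ((i + j)%N == N)%:R * F i j =
  \sum_(0 <= i < N.+1) F i (N - i)%N.
Proof.
move=> NB; rewrite (big_nat_widen 0 N.+1 B) // [RHS]big_mkcond /=.
apply: eq_big_nat => i /andP[_ iB]; case: (leqP i N) => [iN | Ni].
  rewrite ltnS iN -(@sum_eq_indicator B (N - i)%N (F i)); last by lia.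
  by apply: eq_bigr => j _; congr (_%:R * _); apply/eqP/eqP; lia.
rewrite ltnS leqNgt Ni big1 // => j _.
by rewrite (_ : (i + j == N)%N = false) ?mul0r //; apply/eqP; lia.
Qed.

Lemma sum_split_mod P U (F : nat -> rat) :
  \sum_(0 <= i < P * U) F i = \sum_(0 <= u < U) \sum_(0 <= c < P) F (P * u + c)%N.
Proof.
elim: U => [|U IH]; first by rewrite muln0 !big_geq.
rewrite big_nat_recr //= -IH mulnS addnC (@big_cat_nat _ _ _ (P * U)) //=; last by lia.
congr (_ + _); rewrite -{1}[(P * U)%N]add0n big_addn addKn.
by apply: eq_bigr => i _; rewrite addnC.
Qed.

Lemma sum_antidiag_residue_pick P U N c d (F : nat -> nat -> rat) :
  (c < P)%N -> (d < P)%N ->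
  \sum_(0 <= i < P * U) \sum_(0 <= j < P * U) ((i + j)%N == N)%:R *
    ((c == i %% P)%N%:R * (d == j %% P)%N%:R * F i j) =
  \sum_(0 <= u < U) \sum_(0 <= v < U)
    ((P * u + c + (P * v + d))%N == N)%:R * F (P * u + c)%N (P * v + d)%N.
Proof.
move=> cP dP; have modP u e : (e < P)%N -> ((P * u + e) %% P = e)%N.
  by move=> eP; rewrite mulnC modnMDl modn_small.
rewrite sum_split_mod; apply: eq_bigr => u _.
rewrite -(@sum_eq_indicator P c (fun c' => \sum_(0 <= v < U)
  ((P * u + c' + (P * v + d))%N == N)%:R * F (P * u + c')%N (P * v + d)%N)) //.
apply: eq_big_nat => c' /andP[_ c'P]; rewrite sum_split_mod mulr_sumr.
apply: eq_bigr => v _; rewrite -(@sum_eq_indicator P d (fun d' =>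
  ((P * u + c' + (P * v + d'))%N == N)%:R * F (P * u + c')%N (P * v + d')%N)) //.
rewrite mulr_sumr; apply: eq_big_nat => d' /andP[_ d'P].
by rewrite !modP // (eq_sym c) (eq_sym d); ring.
Qed.

(* If N = c + d + P M, the terms are i = c + P u and N - i = d + P (M - u) with u <= M. *)
Lemma sum_antidiag_residues P c d N (F : nat -> nat -> rat) : (c < P)%N -> (d < P)%N ->
  \sum_(0 <= i < N.+1) (c == i %% P)%N%:R * (d == (N - i) %% P)%N%:R * F i (N - i)%N =
  if ((c + d <= N) && (P %| N - (c + d)))%N then
    \sum_(0 <= u < ((N - (c + d)) %/ P).+1)
      F (c + P * u)%N (d + P * ((N - (c + d)) %/ P - u))%N
  else 0.
Proof.
move=> cP dP; rewrite -(@sum_antidiag (P * N.+1) N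
  (fun i j => (c == i %% P)%N%:R * (d == j %% P)%N%:R * F i j)); last by nia.
have P_gt0 : (0 < P)%N by lia.
have split_sum u v : (P * u + c + (P * v + d) = P * (u + v) + (c + d))%N by ring.
rewrite sum_antidiag_residue_pick //; case: ifP => [/andP[cdN PN] | no_sol].
  set M := ((N - (c + d)) %/ P)%N.
  have eN : N = (P * M + (c + d))%N by rewrite /M mulnC divnK // subnK.
  rewrite -(@sum_antidiag N.+1 M (fun u v => F (c + P * u)%N (d + P * v)%N)); last first.
    by rewrite ltnS [X in (_ <= X)%N]eN; nia.
  apply: eq_bigr => u _; apply: eq_bigr => v _.
  by rewrite split_sum {1}eN eqn_add2r eqn_pmul2l // (addnC (P * u)) (addnC (P * v)).
apply: big1 => u _; apply: big1 => v _.
rewrite (_ : (_ == N)%N = false) ?mul0r //; apply: contraFF no_sol => /eqP <-.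
by rewrite split_sum addnK leq_addl dvdn_mulr.
Qed.

Section DworkCongruence.

Variable p : nat.
Hypothesis p_pr : prime p.

Let p_gt0 : (0 < p)%N := prime_gt0 p_pr.

Definition p_lipschitz (X : nat -> rat) :=
  (forall n, p_integral p (X n)) /\
  (forall n m e, congr_mod_pow p e.+1 (X (n + m * p ^ e)%N) (X n)).

Lemma p_lipschitz_const c : p_integral p c -> p_lipschitz (fun=> c).
Proof. by move=> pc; split=> // n m e; apply: congr_mod_refl. Qed.

Lemma p_lipschitzM X Y : p_lipschitz X -> p_lipschitz Y -> p_lipschitz (fun n => X n * Y n).
Proof.
move=> [pX X_lip] [pY Y_lip]; split=> [n | n m e]; first exact: p_integralM.
by apply: congr_modM.
Qed.

Lemma p_lipschitz_shift X c t : p_lipschitz X -> p_lipschitz (fun n => X (c + p ^ t * n)%N).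
Proof.
move=> [pX X_lip]; split=> // n m e.
have -> : (c + p ^ t * (n + m * p ^ e) = c + p ^ t * n + m * p ^ (t + e))%N.
  by rewrite expnD; ring.
by apply: (congr_mod_le p_pr _ (X_lip _ _ _)); rewrite ltnS leq_addl.
Qed.

Lemma p_lipschitz_mod X e n : p_lipschitz X -> congr_mod_pow p e.+1 (X n) (X (n %% p ^ e)%N).
Proof. by case=> _ /(_ (n %% p ^ e) (n %/ p ^ e) e)%N; rewrite addnC -divn_eq. Qed.

Variable A : nat -> rat.
Hypothesis A_integral : forall n, p_integral p (A n).
Hypothesis A_factor : forall b, (b < p)%N ->
  exists2 R, p_lipschitz R & forall n, A (b + p * n)%N = A n * R n.

Lemma A_factor_pexp r c : (c < p ^ r)%N ->
  exists2 R, p_lipschitz R & forall n, A (c + p ^ r * n)%N = A n * R n.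
Proof.
elim: r c => [|r IH] c.
  rewrite expn0 ltnS leqn0 => /eqP ->; exists (fun=> 1).
    exact: p_lipschitz_const (p_integral1 p_pr).
  by move=> n; rewrite mul1n add0n mulr1.
move=> c_lt; have [|R' R'_lip AR'] := IH (c %/ p)%N; first by rewrite ltn_divLR // -expnSr.
have [R R_lip AR] := A_factor (ltn_pmod c p_gt0).
exists (fun n => R' n * R (c %/ p + p ^ r * n)%N).
  by apply: p_lipschitzM => //; apply: p_lipschitz_shift.
move=> n; have -> : (c + p ^ r.+1 * n = c %% p + p * (c %/ p + p ^ r * n))%N.
  by rewrite {1}(divn_eq c p) expnS; ring.
by rewrite AR AR' mulrA.
Qed.

Definition dwork_sum (Q : nat) (X Y : nat -> rat) (N : nat) :=
  \sum_(0 <= i < N.+1)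
    A i * A (N - i)%N * ((N - i < Q)%N%:R - (i < Q)%N%:R) * (X i * Y (N - i)%N).

Lemma eq_dwork_sum Q X Y X' Y' N : X =1 X' -> Y =1 Y' ->
  dwork_sum Q X Y N = dwork_sum Q X' Y' N.
Proof. by move=> XX' YY'; apply: eq_bigr => i _; rewrite XX' YY'. Qed.

Lemma dwork_sum_suml Q (r : seq nat) (F : nat -> nat -> rat) Y N :
  dwork_sum Q (fun i => \sum_(c <- r) F c i) Y N = \sum_(c <- r) dwork_sum Q (F c) Y N.
Proof.
rewrite /dwork_sum; under eq_bigr do rewrite mulr_suml !mulr_sumr.
by rewrite exchange_big.
Qed.

Lemma dwork_sum_sumr Q (r : seq nat) X (F : nat -> nat -> rat) N :
  dwork_sum Q X (fun j => \sum_(c <- r) F c j) N = \sum_(c <- r) dwork_sum Q X (F c) N.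
Proof.
rewrite /dwork_sum; under eq_bigr do rewrite !mulr_sumr.
by rewrite exchange_big.
Qed.

Lemma dwork_sumZ Q a b X Y N :
  dwork_sum Q (fun i => a * X i) (fun j => b * Y j) N = a * b * dwork_sum Q X Y N.
Proof. by rewrite /dwork_sum mulr_sumr; apply: eq_bigr => i _; ring. Qed.

Lemma dwork_sum_const Q a b N : dwork_sum Q (fun=> a) (fun=> b) N = 0.
Proof.
rewrite /dwork_sum; under eq_bigr do rewrite mulrBr mulrBl.
rewrite sumrB [X in _ - X]big_nat_rev /=; apply/eqP; rewrite subr_eq0; apply/eqP.
apply: eq_big_nat => i /andP[_ iN].
by rewrite add0n subSS subKn //; ring.
Qed.

Let weight_integral Q N i :
  p_integral p (A i * A (N - i)%N * ((N - i < Q)%N%:R - (i < Q)%N%:R)).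
Proof.
apply: (p_integralM p_pr); first exact: (p_integralM p_pr).
by apply: (p_integralB p_pr); apply: (p_integral_nat p_pr).
Qed.

Lemma congr_dwork_sum e Q X Y X' Y' N :
  (forall i, p_integral p (X i)) -> (forall j, p_integral p (Y' j)) ->
  (forall i, congr_mod_pow p e (X i) (X' i)) -> (forall j, congr_mod_pow p e (Y j) (Y' j)) ->
  congr_mod_pow p e (dwork_sum Q X Y N) (dwork_sum Q X' Y' N).
Proof.
move=> pX pY' XX' YY'; rewrite /congr_mod_pow /dwork_sum -sumrB.
apply: (p_multiple_sum p_pr) => i _; rewrite -mulrBr.
by apply: (p_multipleMl p_pr); [apply: weight_integral | apply: congr_modM].
Qed.

Definition mod_diff (X : nat -> rat) (r n : nat) :=
  X (n %% p ^ r)%N - (if r is r'.+1 then X (n %% p ^ r')%N else 0).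

Lemma sum_mod_diff X s n : \sum_(0 <= r < s.+1) mod_diff X r n = X (n %% p ^ s)%N.
Proof.
elim: s => [|s IH]; first by rewrite big_nat1 /mod_diff subr0.
by rewrite big_nat_recr //= IH /mod_diff addrC subrK.
Qed.

Lemma p_multiple_mod_diff X r n : p_lipschitz X -> p_multiple p r (mod_diff X r n).
Proof.
case=> pX X_lip; case: r => [|r]; rewrite /mod_diff; first by rewrite p_multiple_exp0 // subr0.
have -> : (n %% p ^ r.+1 = n %% p ^ r + (n %% p ^ r.+1) %/ p ^ r * p ^ r)%N.
  by rewrite addnC {1}(divn_eq (n %% p ^ r.+1) (p ^ r)) modn_dvdm // dvdn_exp2l.
exact: X_lip.
Qed.

Lemma mod_diff_mod X r R n : (r <= R)%N -> mod_diff X r n = mod_diff X r (n %% p ^ R)%N.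
Proof.
move=> rR; rewrite /mod_diff modn_dvdm ?dvdn_exp2l //.
by case: r rR => // r rR; rewrite [in RHS]modn_dvdm // dvdn_exp2l // ltnW.
Qed.

Definition residue_indicator (P c i : nat) : rat := (c == i %% P)%N%:R.

Lemma periodic_residue_expansion (rho : nat -> rat) P i :
  (0 < P)%N -> (forall i, rho i = rho (i %% P)%N) ->
  rho i = \sum_(0 <= c < P) rho c * residue_indicator P c i.
Proof.
move=> P_gt0 rho_per; rewrite rho_per -(sum_eq_indicator rho (ltn_pmod i P_gt0)).
by apply: eq_bigr => c _; rewrite /residue_indicator mulrC eq_sym.
Qed.

Lemma dwork_sum_residue_indicator P Q c d N (Rc Rd : nat -> rat) :
  (c < P)%N -> (d < P)%N ->
  (forall u, A (c + P * u)%N = A u * Rc u) -> (forall v, A (d + P * v)%N = A v * Rd v) ->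
  dwork_sum (P * Q) (residue_indicator P c) (residue_indicator P d) N =
  if ((c + d <= N) && (P %| N - (c + d)))%N
  then dwork_sum Q Rc Rd ((N - (c + d)) %/ P)%N else 0.
Proof.
move=> cP dP ARc ARd; rewrite /dwork_sum.
rewrite (eq_bigr (fun i => (c == i %% P)%N%:R * (d == (N - i) %% P)%N%:R *
  (A i * A (N - i)%N * ((N - i < P * Q)%N%:R - (i < P * Q)%N%:R)))); last first.
  by move=> i _; rewrite /residue_indicator; ring.
rewrite (@sum_antidiag_residues _ _ _ _ (fun i j =>
  A i * A j * ((j < P * Q)%N%:R - (i < P * Q)%N%:R))) //; case: ifP => // _.
by apply: eq_bigr => u _; rewrite ARc ARd !ltn_add_pmul //; ring.
Qed.

Definition dwork_congruence (s : nat) := forall X Y, p_lipschitz X -> p_lipschitz Y ->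
  forall N, p_multiple p s (dwork_sum (p ^ s.-1) X Y N).

(* Splitting p^R-periodic sequences into residue classes mod p^R and using
   A (c + p^R n) = A n * R_c n lowers the level of the congruence by R. *)
Lemma dwork_congruence_periodic s R (rho sigma : nat -> rat) N :
  (0 < R <= s)%N -> dwork_congruence (s.+1 - R) ->
  (forall i, p_integral p (rho i)) -> (forall j, p_integral p (sigma j)) ->
  (forall i, rho i = rho (i %% p ^ R)%N) -> (forall j, sigma j = sigma (j %% p ^ R)%N) ->
  p_multiple p (s.+1 - R) (dwork_sum (p ^ s) rho sigma N).
Proof.
move=> /andP[R_gt0 Rs]; rewrite subSn // => IH prho psigma rho_per sigma_per.
have pR_gt0 : (0 < p ^ R)%N by rewrite expn_gt0 p_gt0.
have -> : (p ^ s = p ^ R * p ^ (s - R))%N by rewrite -expnD subnKC.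
rewrite (eq_dwork_sum _ _ (fun i => periodic_residue_expansion i pR_gt0 rho_per)
                            (fun j => periodic_residue_expansion j pR_gt0 sigma_per)).
rewrite dwork_sum_suml big_seq; apply: (p_multiple_sum p_pr) => c.
rewrite mem_index_iota dwork_sum_sumr big_seq => /andP[_ cR].
apply: (p_multiple_sum p_pr) => d; rewrite mem_index_iota => /andP[_ dR].
rewrite dwork_sumZ; apply: (p_multipleMl p_pr); first exact: (p_integralM p_pr).
have [Rc Rc_lip ARc] := A_factor_pexp cR; have [Rd Rd_lip ARd] := A_factor_pexp dR.
rewrite (dwork_sum_residue_indicator _ _ cR dR ARc ARd).
by case: ifP => _; [apply: IH | apply: p_multiple0].
Qed.

Lemma dwork_congruence_mod_diff s r1 r2 X Y N :
  (r1 <= s)%N -> (r2 <= s)%N -> (forall t, (0 < t <= s)%N -> dwork_congruence t) ->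
  p_lipschitz X -> p_lipschitz Y ->
  p_multiple p s.+1 (dwork_sum (p ^ s) (mod_diff X r1) (mod_diff Y r2) N).
Proof.
move=> r1s r2s IH X_lip Y_lip.
have [R_eq0 | R_gt0] := posnP (maxn r1 r2).
  have [-> ->] : r1 = 0%N /\ r2 = 0%N by lia.
  rewrite (@eq_dwork_sum _ _ _ (fun=> X 0%N) (fun=> Y 0%N)) ?dwork_sum_const ?p_multiple0 //.
    by move=> i; rewrite /mod_diff expn0 modn1 subr0.
  by move=> i; rewrite /mod_diff expn0 modn1 subr0.
set R := maxn r1 r2.
have Rs : (R <= s)%N by rewrite geq_max r1s.
rewrite (@eq_dwork_sum _ _ _ (fun i => (p ^ r1)%N%:R * (mod_diff X r1 i / (p ^ r1)%N%:R))
    (fun j => (p ^ r2)%N%:R * (mod_diff Y r2 j / (p ^ r2)%N%:R))); first last.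
- by move=> j; rewrite mulrC divfK ?natr_pexp_neq0.
- by move=> i; rewrite mulrC divfK ?natr_pexp_neq0.
rewrite dwork_sumZ -natrM -expnD.
apply: (p_multiple_le p_pr (e := r1 + r2 + (s.+1 - R))); first by rewrite /R; lia.
apply: (p_multipleM p_pr).
  by rewrite -[_%:R]mulr1; apply: (p_multiple_pexp p_pr) (p_integral1 p_pr).
apply: dwork_congruence_periodic => //.
- by rewrite R_gt0.
- by apply: IH; rewrite /R; lia.
- by move=> i; apply: p_multiple_mod_diff.
- by move=> j; apply: p_multiple_mod_diff.
- by move=> i; rewrite (@mod_diff_mod X r1 R i) ?leq_maxl.
- by move=> j; rewrite (@mod_diff_mod Y r2 R j) ?leq_maxr.
Qed.

Theorem dwork_congruence_holds s : (0 < s)%N -> dwork_congruence s.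
Proof.
elim/ltn_ind: s => -[//|s] IH _ X Y X_lip Y_lip N /=.
pose Xs i := X (i %% p ^ s)%N; pose Ys j := Y (j %% p ^ s)%N.
have XY_Xs_Ys : congr_mod_pow p s.+1 (dwork_sum (p ^ s) X Y N) (dwork_sum (p ^ s) Xs Ys N).
  have [[pX _] [pY _]] := (X_lip, Y_lip).
  apply: congr_dwork_sum => [i | j | i | j]; first exact: pX; first exact: pY.
    exact: p_lipschitz_mod X_lip.
  exact: p_lipschitz_mod Y_lip.
suff : p_multiple p s.+1 (dwork_sum (p ^ s) Xs Ys N).
  by move=> /(p_multipleD p_pr XY_Xs_Ys); rewrite subrK.
rewrite (@eq_dwork_sum _ _ _ (fun i => \sum_(0 <= r < s.+1) mod_diff X r i)
                             (fun j => \sum_(0 <= r < s.+1) mod_diff Y r j)); first last.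
- by move=> j; rewrite sum_mod_diff.
- by move=> i; rewrite sum_mod_diff.
rewrite dwork_sum_suml big_seq; apply: (p_multiple_sum p_pr) => r1.
rewrite mem_index_iota dwork_sum_sumr big_seq => /andP[_ r1s].
apply: (p_multiple_sum p_pr) => r2; rewrite mem_index_iota => /andP[_ r2s].
apply: dwork_congruence_mod_diff => // t /andP[t_gt0 ts].
by apply: IH => //; rewrite ltnS.
Qed.

End DworkCongruence.

Definition trunc_poly (n : nat) (f : series) : {poly rat} := \poly_(i < n.+1) f i.

Lemma coef_trunc_poly n f i : (i <= n)%N -> (trunc_poly n f)`_i = f i.
Proof. by move=> i_le; rewrite coef_poly ltnS i_le. Qed.

Lemma smul_trunc_poly n f g m : (m <= n)%N -> smul f g m = (trunc_poly n f * trunc_poly n g)`_m.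
Proof.
move=> m_le; rewrite coefM; apply: eq_bigr => i _.
have i_le : (i <= n)%N by apply: leq_trans m_le; rewrite -ltnS.
by rewrite !coef_trunc_poly // (leq_trans (leq_subr _ _) m_le).
Qed.

Lemma smulC f g n : smul f g n = smul g f n.
Proof. by rewrite !(smul_trunc_poly _ _ (leqnn n)) mulrC. Qed.

Lemma coefM_eq_low n (q1 q2 r : {poly rat}) :
  (forall i, (i <= n)%N -> q1`_i = q2`_i) -> (r * q1)`_n = (r * q2)`_n.
Proof. by move=> q12; rewrite !coefM; apply: eq_bigr => i _; rewrite q12 // leq_subr. Qed.

Lemma size_inv_seq f n : size (inv_seq f n) = n.+1.
Proof. by elim: n => [|n IH] //=; rewrite size_rcons IH. Qed.

Lemma nth_inv_seq f n m : (m <= n)%N -> nth 0 (inv_seq f n) m = sinv f m.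
Proof.
rewrite /sinv; elim: n => [|n IH]; first by rewrite leqn0 => /eqP ->.
by rewrite leq_eqVlt => /orP[/eqP -> // | m_lt]; rewrite /= nth_rcons size_inv_seq m_lt IH.
Qed.

Lemma sinvS f n : sinv f n.+1 = - (\sum_(i < n.+1) f i.+1 * sinv f (n - i)%N) / f 0%N.
Proof.
rewrite {1}/sinv /= nth_rcons size_inv_seq ltnn eqxx; congr (- _ / _).
by apply: eq_bigr => i _; rewrite nth_inv_seq // leq_subr.
Qed.

Lemma smul_sinv g n : g 0%N != 0 -> smul g (sinv g) n = (n == 0)%:R.
Proof.
move=> g0; case: n => [|n]; first by rewrite /smul big_ord1 mulfV.
rewrite /smul big_ord_recl subn0 sinvS mulrC divfK // addrC.
by under eq_bigr do rewrite lift0 subSS; rewrite subrr.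
Qed.

Lemma p_integral_sinv p g : prime p -> g 0%N = 1 -> (forall n, p_integral p (g n)) ->
  forall n, p_integral p (sinv g n).
Proof.
move=> p_pr g0 pg; elim/ltn_ind => -[|n] IH; first by rewrite /sinv /= g0 invr1 p_integral1.
rewrite sinvS g0 divr1; apply: p_integralN; apply: (p_integral_sum p_pr) => i _.
by apply: (p_integralM p_pr) => //; apply: IH; rewrite ltnS leq_subr.
Qed.

Lemma sdivB F G H K n : G 0%N != 0 -> K 0%N != 0 ->
  sdiv F G n - sdiv H K n =
  smul (smul (sinv G) (sinv K)) (fun m => smul F K m - smul G H m) n.
Proof.
move=> G0 K0; set T := trunc_poly n.
have T_smul f g i : (i <= n)%N -> (T (smul f g))`_i = (T f * T g)`_i.
  by move=> i_le; rewrite coef_trunc_poly // (smul_trunc_poly _ _ i_le).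
have T_sinv f : f 0%N != 0 -> forall i, (i <= n)%N -> (T f * T (sinv f))`_i = (1 : {poly rat})`_i.
  by move=> f0 i i_le; rewrite -smul_trunc_poly // smul_sinv // coef1.
rewrite (smul_trunc_poly _ _ (leqnn n)).
rewrite (@coefM_eq_low n _ (T F * T K - T G * T H)); last first.
  by move=> i i_le; rewrite coef_trunc_poly // coefB -!(smul_trunc_poly _ _ i_le).
rewrite mulrC (@coefM_eq_low n _ (T (sinv G) * T (sinv K))); last exact: T_smul.
rewrite mulrBl coefB /sdiv !(smul_trunc_poly _ _ (leqnn n)).
rewrite [in X in _ = X - _]mulrACA [in X in _ = _ - X]mulrACA.
rewrite (coefM_eq_low _ (T_sinv K K0)) [in X in _ = _ - X]mulrC.
by rewrite (coefM_eq_low _ (T_sinv G G0)) !mulr1.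
Qed.

Lemma congr_mod_sdiv p s (F G H K : series) : prime p ->
  G 0%N = 1 -> K 0%N = 1 ->
  (forall n, p_integral p (G n)) -> (forall n, p_integral p (K n)) ->
  (forall m, congr_mod_pow p s (smul F K m) (smul G H m)) ->
  forall n, congr_mod_pow p s (sdiv F G n) (sdiv H K n).
Proof.
move=> p_pr G0 K0 pG pK FK_GH n.
rewrite /congr_mod_pow sdivB ?G0 ?K0 ?oner_eq0 //.
apply: (p_multiple_sum p_pr) => i _; apply: (p_multipleMl p_pr); last exact: FK_GH.
apply: (p_integral_sum p_pr) => j _.
by apply: (p_integralM p_pr); apply: p_integral_sinv.
Qed.

Lemma smul_subst_pow p f g N : (0 < p)%N ->
  smul f (subst_pow p g) N =
  \sum_(0 <= u < (N %/ p).+1) f (N %% p + p * u)%N * g (N %/ p - u)%N.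
Proof.
move=> p_gt0; have Np : (N %% p < p)%N by rewrite ltn_pmod.
rewrite /smul -(big_mkord xpredT (fun i => f i * subst_pow p g (N - i)%N)).
rewrite (eq_big_nat _ _ (F2 := fun i => (N %% p == i %% p)%N%:R * (0 == (N - i) %% p)%N%:R *
                                         (f i * g ((N - i) %/ p)%N))); last first.
  move=> i /andP[_]; rewrite ltnS => iN.
  rewrite /subst_pow (eqn_mod_dvd _ iN) eq_sym -/(dvdn p (N - i)).
  by case: (p %| N - i)%N; rewrite /= ?mul1r ?mul0r ?mulr0.
rewrite (@sum_antidiag_residues _ _ _ _ (fun i j => f i * g (j %/ p)%N)) //.
have N_sub_mod : (N - N %% p = N %/ p * p)%N by rewrite {1}(divn_eq N p) addnK.
by rewrite addn0 leq_mod N_sub_mod dvdn_mull // mulnK //; under eq_bigr do rewrite add0n mulKn //.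
Qed.

Lemma smul_strunc_diff p s A R N : (0 < p)%N -> (0 < s)%N ->
  (forall n, A (N %% p + p * n)%N = A n * R n) ->
  smul A (subst_pow p (strunc (p ^ s.-1) A)) N - smul (subst_pow p A) (strunc (p ^ s) A) N =
  dwork_sum A (p ^ s.-1) R (fun=> 1) (N %/ p).
Proof.
move=> p_gt0 s_gt0 AR; rewrite [X in _ - X]smulC !smul_subst_pow // /dwork_sum -sumrB.
apply: eq_bigr => u _; rewrite /strunc -(prednK s_gt0) expnS ltn_add_pmul ?ltn_pmod //= AR.
by case: (u < _)%N; case: (_ < _)%N; rewrite /= ?subr0 ?sub0r; ring.
Qed.

Lemma p_integral_strunc p m f : prime p -> (forall n, p_integral p (f n)) ->
  forall n, p_integral p (strunc m f n).
Proof.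
by move=> p_pr pf n; rewrite /strunc; case: ifP => _; [apply: pf | apply: p_integral0].
Qed.

Lemma p_integral_subst_pow p q f : prime p -> (forall n, p_integral p (f n)) ->
  forall n, p_integral p (subst_pow q f n).
Proof.
by move=> p_pr pf n; rewrite /subst_pow; case: ifP => _; [apply: pf | apply: p_integral0].
Qed.

Section PFreeFactorial.

Variable p : nat.
Hypothesis p_pr : prime p.

Definition pfree (j : nat) : nat := if (p %| j)%N then 1%N else j.

Definition pfree_fact (m : nat) : nat := \prod_(0 <= j < m) pfree j.+1.

Lemma pfree_ndvd j : ~~ (p %| pfree j)%N.
Proof.
rewrite /pfree; case: ifP => [_ | -> //].
by rewrite dvdn1 neq_ltn prime_gt1 ?orbT.
Qed.

Lemma pfree_fact_ndvd m : ~~ (p %| pfree_fact m)%N.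
Proof.
rewrite /pfree_fact; elim: m => [|m IH]; first by rewrite big_geq // dvdn1 neq_ltn prime_gt1 ?orbT.
by rewrite big_nat_recr //= Euclid_dvdM // negb_or IH pfree_ndvd.
Qed.

Lemma fact_pfree_fact m : (m`! = p ^ (m %/ p) * (m %/ p)`! * pfree_fact m)%N.
Proof.
have p_gt0 := prime_gt0 p_pr.
elim: m => [|m IH]; first by rewrite div0n /pfree_fact big_geq.
rewrite factS IH /pfree_fact big_nat_recr //= -/(pfree_fact m) divnS // /pfree.
case: ifP => pm /=; last by rewrite add0n; ring.
have -> : (m.+1 = p * (m %/ p).+1)%N by rewrite -[LHS](divnK pm) divnS // pm mulnC.
by rewrite add1n factS expnS; ring.
Qed.

Lemma pfree_factD x P :
  (pfree_fact (x + P) = pfree_fact x * \prod_(0 <= j < P) pfree (x + j).+1)%N.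
Proof.
rewrite /pfree_fact (@big_cat_nat _ _ _ x) //= ?leq_addr //.
congr (_ * _)%N; rewrite -{1}[x]add0n big_addn addKn.
by apply: eq_bigr => j _; rewrite addnC.
Qed.

Lemma pfree_add_pexp E x : (0 < E)%N -> (pfree (x + p ^ E) = pfree x %[mod p ^ E])%N.
Proof.
move=> E_gt0; rewrite /pfree dvdn_addl ?dvdn_exp //.
by case: ifP => // _; rewrite modnDr.
Qed.

Lemma congr_mod_pfree_window E x : (0 < E)%N ->
  congr_mod_pow p E (\prod_(0 <= j < p ^ E) pfree (x + j).+1)%N%:R (pfree_fact (p ^ E))%:R.
Proof.
move=> E_gt0; elim: x => [|x IH]; first by under eq_bigr do rewrite add0n; apply: congr_mod_refl.
apply: (congr_mod_trans p_pr) IH; apply: (congr_mod_cancel p_pr (pfree_ndvd x.+1)).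
have slide P : (\prod_(0 <= j < P) pfree (x.+1 + j).+1 * pfree x.+1 =
                \prod_(0 <= j < P) pfree (x + j).+1 * pfree (x + P).+1)%N.
  transitivity (\prod_(0 <= j < P.+1) pfree (x + j).+1)%N; last by rewrite big_nat_recr.
  rewrite big_nat_recl //= addn0 mulnC; congr (_ * _)%N.
  by apply: eq_bigr => j _; rewrite addSnnS.
rewrite -!natrM slide !natrM; apply: (congr_modM p_pr); rewrite ?p_integral_nat //.
  exact: congr_mod_refl.
by apply: (congr_mod_nat p_pr); rewrite -addSn pfree_add_pexp.
Qed.

Lemma congr_mod_pfree_fact_shift E x L : (0 < E)%N ->
  congr_mod_pow p E (pfree_fact (x + L * p ^ E))%:R
                    ((pfree_fact x)%:R * (pfree_fact (p ^ E))%:R ^+ L).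
Proof.
move=> E_gt0; elim: L => [|L IH]; first by rewrite mul0n addn0 expr0 mulr1; apply: congr_mod_refl.
rewrite mulSn addnCA addnC pfree_factD natrM exprSr mulrA.
by apply: (congr_modM p_pr); rewrite ?p_integral_nat //; apply: congr_mod_pfree_window.
Qed.

Lemma expn_pfactor_totient a e : ~~ (p %| a)%N -> ((a ^ (p - 1)) ^ (p ^ e) = 1 %[mod p ^ e.+1])%N.
Proof.
move=> pa; have cop : coprime a (p ^ e.+1) by rewrite coprimeXr // coprime_sym prime_coprime.
by rewrite -expnM subn1 -(totient_pfactor p_pr (ltn0Sn e)) Euler_exp_totient.
Qed.

End PFreeFactorial.

Lemma factD m l : ((m + l)`! = m`! * \prod_(0 <= j < l) (m + j).+1)%N.
Proof.
elim: l => [|l IH]; first by rewrite addn0 big_geq // muln1.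
by rewrite addnS factS IH big_nat_recr //=; ring.
Qed.

Definition prod_nonmultiples (k n : nat) : nat :=
  \prod_(1 <= j < k) \prod_(0 <= i < n) (j + k * i).

Lemma fact_mul k n : (0 < k)%N -> ((k * n)`! = prod_nonmultiples k n * k ^ n * n`!)%N.
Proof.
move=> k_gt0; elim: n => [|n IH].
  by rewrite muln0 /prod_nonmultiples big1 // => j _; rewrite big_geq.
rewrite mulnS addnC factD IH /prod_nonmultiples expnS factS.
under [in RHS]eq_bigr do rewrite big_nat_recr //=.
rewrite big_split /=.
have -> : (\prod_(0 <= j < k) (k * n + j).+1 = \prod_(1 <= j < k) (j + k * n) * (k * n.+1))%N.
  rewrite -(prednK k_gt0) big_nat_recr //= big_add1 /=.
  by congr (_ * _)%N; [apply: eq_bigr => j _ | ]; ring.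
ring.
Qed.

Lemma hypF_fact k n : (0 < k)%N ->
  hypF k n = (k * n)`!%:R / ((k ^ (k * n))%:R * (n`!%:R) ^+ k).
Proof.
move=> k_gt0; have k0 : (k%:R : rat) != 0 by rewrite pnatr_eq0 -lt0n.
have n0 : (n`!%:R : rat) != 0 by rewrite pnatr_eq0 -lt0n fact_gt0.
have poch j : pochhammer (j%:R / k%:R) n = (\prod_(0 <= i < n) (j + k * i))%N%:R / k%:R ^+ n.
  rewrite /pochhammer (_ : k%:R ^+ n = \prod_(0 <= i < n) (k%:R : rat)); last first.
    by rewrite prodr_const_nat subn0.
  rewrite natr_prod -prodf_div big_mkord; apply: eq_bigr => i _.
  by rewrite natrD natrM; field.
rewrite /hypF (eq_bigr _ (fun j _ => poch j)) prodf_div prodr_const_nat -natr_prod.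
rewrite -/(prod_nonmultiples k n) fact_mul // !natrM !natrX mulnC exprM.
rewrite -(prednK k_gt0) subn1 /= !exprS; field.
by rewrite prednK // n0 !expf_neq0.
Qed.

Section HypergeometricDigits.

Variables p k : nat.
Hypotheses (p_pr : prime p) (k_gt0 : (0 < k)%N) (pk : ~~ (p %| k)%N).

Let p_gt0 : (0 < p)%N := prime_gt0 p_pr.

(* By fact_pfree_fact, (k (b + p n))`! and (b + p n)`! split off p ^ (k n + carry b) and
   p ^ n; the rest of hypF k (b + p n) / hypF k n is the following ratio. *)
Let carry b := (k * b %/ p)%N.

Definition rising_part b n := (p ^ carry b * \prod_(0 <= i < carry b) (k * n + i).+1)%N.

Definition digit_den b n :=
  (k ^ (k * b) * (k ^ k) ^ ((p - 1) * n) * pfree_fact p (b + p * n) ^ k)%N.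

Definition digit_ratio b n : rat :=
  (rising_part b n * pfree_fact p (k * (b + p * n)))%N%:R / (digit_den b n)%:R.

Lemma digit_den_ndvd b n : ~~ (p %| digit_den b n)%N.
Proof.
by rewrite /digit_den !Euclid_dvdM // !Euclid_dvdX // (negbTE pk) (negbTE (pfree_fact_ndvd p_pr _)).
Qed.

Lemma hypF_digit b n : (b < p)%N -> hypF k (b + p * n)%N = hypF k n * digit_ratio b n.
Proof.
move=> bp; rewrite !hypF_fact //.
have kbp : ((k * (b + p * n)) %/ p = k * n + carry b)%N.
  by rewrite (_ : k * (b + p * n) = k * n * p + k * b)%N ?divnMDl //; ring.
have bpp : ((b + p * n) %/ p = n)%N by rewrite addnC mulnC divnMDl // divn_small // addn0.
rewrite (fact_pfree_fact p_pr (k * _)) kbp factD (fact_pfree_fact p_pr (b + _)) bpp.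
rewrite /digit_ratio /rising_part /digit_den.
have -> : (k ^ (k * (b + p * n)) = k ^ (k * b) * (k ^ k) ^ ((p - 1) * n) * k ^ (k * n))%N.
  by rewrite -!expnM -!expnD; congr (_ ^ _)%N; rewrite -(prednK p_gt0) subn1 /=; ring.
have k0 : (k%:R : rat) != 0 by rewrite pnatr_eq0 -lt0n.
have n0 : (n`!%:R : rat) != 0 by rewrite pnatr_eq0 -lt0n fact_gt0.
have kn0 : ((k * n)`!%:R : rat) != 0 by rewrite pnatr_eq0 -lt0n fact_gt0.
have p0 : (p%:R : rat) != 0 by rewrite pnatr_eq0 -lt0n.
have g0 : ((pfree_fact p (b + p * n))%:R : rat) != 0.
  exact: natr_ndvd_neq0 (pfree_fact_ndvd p_pr _).
rewrite !natrM !natrX !exprD !exprMn -exprM mulnC exprM.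
by field; rewrite !expf_neq0.
Qed.

(* Shifting n by m p^e multiplies numerator and denominator of digit_ratio by W e ^+ (k m)
   mod p^(e+1); only their ratio is Lipschitz. *)
Let W e : rat := (pfree_fact p (p ^ e.+1))%:R.

Lemma congr_rising_part b n m e :
  congr_mod_pow p e.+1 (rising_part b (n + m * p ^ e))%:R (rising_part b n)%:R.
Proof.
have [q0 | q_gt0] := posnP (carry b).
  by rewrite /rising_part q0 !big_geq //; apply: congr_mod_refl.
rewrite /rising_part !natrM /congr_mod_pow -mulrBr.
have prod_congr : congr_mod_pow p e (\prod_(0 <= i < carry b) (k * (n + m * p ^ e) + i).+1)%N%:R
                                    (\prod_(0 <= i < carry b) (k * n + i).+1)%N%:R.
  rewrite !natr_prod; apply: (congr_mod_prod p_pr) => i _; rewrite ?p_integral_nat //.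
  apply: (congr_mod_nat p_pr).
  rewrite (_ : (k * (n + m * p ^ e) + i).+1 = k * m * p ^ e + (k * n + i).+1)%N ?modnMDl //.
  by ring.
have := p_multipleM p_pr (p_multiple_pexp p_pr (carry b) (p_integral1 p_pr)) prod_congr.
by rewrite mulr1; apply: (p_multiple_le p_pr); rewrite addnC -addn1 leq_add2l.
Qed.

Lemma congr_pfree_num b n m e :
  congr_mod_pow p e.+1 (pfree_fact p (k * (b + p * (n + m * p ^ e))))%:R
                       ((pfree_fact p (k * (b + p * n)))%:R * W e ^+ (k * m)).
Proof.
rewrite (_ : k * (b + p * (n + m * p ^ e)) = k * (b + p * n) + k * m * p ^ e.+1)%N.
  exact: congr_mod_pfree_fact_shift.
by rewrite expnS; ring.
Qed.

Lemma congr_digit_den b n m e :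
  congr_mod_pow p e.+1 (digit_den b (n + m * p ^ e))%:R ((digit_den b n)%:R * W e ^+ (m * k)).
Proof.
have -> : digit_den b (n + m * p ^ e) =
    (k ^ (k * b) * (k ^ k) ^ ((p - 1) * n) *
     ((((k ^ k) ^ (p - 1)) ^ p ^ e) ^ m * pfree_fact p (b + p * n + m * p ^ e.+1) ^ k))%N.
  rewrite /digit_den (_ : b + p * (n + m * p ^ e) = b + p * n + m * p ^ e.+1)%N; last first.
    by rewrite expnS; ring.
  have -> : ((k ^ k) ^ ((p - 1) * (n + m * p ^ e)) =
             (k ^ k) ^ ((p - 1) * n) * (((k ^ k) ^ (p - 1)) ^ p ^ e) ^ m)%N.
    by rewrite -!expnM -expnD; congr (_ ^ _)%N; ring.
  by rewrite !mulnA.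
rewrite [X in congr_mod_pow _ _ _ X](_ : _ = (k ^ (k * b) * (k ^ k) ^ ((p - 1) * n))%N%:R *
    (1 * ((pfree_fact p (b + p * n))%:R * W e ^+ m) ^+ k)); last first.
  by rewrite /digit_den !natrM [(pfree_fact _ _ ^ k)%:R]natrX exprMn -exprM; ring.
have pGW : p_integral p ((pfree_fact p (b + p * n))%:R * W e ^+ m).
  by apply: (p_integralM p_pr); rewrite ?p_integral_nat ?p_integralX ?p_integral_nat.
rewrite natrM; apply: (congr_modM p_pr).
- exact: (p_integral_nat p_pr).
- by rewrite mul1r; apply: (p_integralX p_pr).
- exact: congr_mod_refl.
rewrite natrM [(pfree_fact _ _ ^ k)%:R]natrX; apply: (congr_modM p_pr).
- exact: (p_integral_nat p_pr).
- exact: (p_integralX p_pr).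
- apply: (@congr_mod_nat _ p_pr _ _ 1); rewrite -modnXm expn_pfactor_totient ?modnXm ?exp1n //.
  by rewrite Euclid_dvdX // (negbTE pk).
apply: (congr_modX p_pr); rewrite ?p_integral_nat //.
exact: congr_mod_pfree_fact_shift.
Qed.

Lemma digit_ratio_lipschitz b : p_lipschitz p (digit_ratio b).
Proof.
split=> [n | n m e].
  by apply: (p_integral_divn p_pr (digit_den_ndvd b n)); apply: p_integral_nat.
rewrite /digit_ratio; apply: (congr_mod_div p_pr); rewrite ?digit_den_ndvd //.
set U1 := rising_part b n; set U2 := pfree_fact p (k * (b + p * n)).
set U1' := rising_part b _; set U2' := pfree_fact p _; set D := digit_den b n.
have pW j : p_integral p (W e ^+ j) by apply: (p_integralX p_pr); apply: p_integral_nat.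
have num_congr : congr_mod_pow p e.+1 (U1' * U2')%N%:R (U1%:R * (U2%:R * W e ^+ (k * m))).
  rewrite natrM; apply: (congr_modM p_pr); rewrite ?p_integral_nat //.
  - by apply: (p_integralM p_pr); rewrite ?p_integral_nat.
  - exact: congr_rising_part.
  - exact: congr_pfree_num.
apply: (congr_mod_trans p_pr (y := U1%:R * (U2%:R * W e ^+ (k * m)) * D%:R)).
  by apply: (congr_modM p_pr); rewrite ?p_integral_nat //; apply: congr_mod_refl.
apply: congr_mod_sym.
rewrite [X in congr_mod_pow _ _ _ X](_ : _ = (U1 * U2)%N%:R * (D%:R * W e ^+ (m * k))).
  apply: (congr_modM p_pr); rewrite ?p_integral_nat //.
  - by apply: (p_integralM p_pr); rewrite ?p_integral_nat.
  - exact: congr_mod_refl.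
  - exact: congr_digit_den.
by rewrite natrM mulnC; ring.
Qed.

End HypergeometricDigits.

Lemma hypF0 k : hypF k 0 = 1.
Proof. by rewrite /hypF big1 ?expr1n ?divr1 // => j _; rewrite /pochhammer big_ord0. Qed.

Lemma hypF_digit_factor p k : prime p -> (0 < k)%N -> ~~ (p %| k)%N ->
  forall b, (b < p)%N ->
  exists2 R, p_lipschitz p R & forall n, hypF k (b + p * n)%N = hypF k n * R n.
Proof.
move=> p_pr k_gt0 pk b bp; exists (digit_ratio p k b); first exact: digit_ratio_lipschitz.
by move=> n; apply: hypF_digit.
Qed.

Lemma p_integral_hypF p k : prime p -> (0 < k)%N -> ~~ (p %| k)%N ->
  forall n, p_integral p (hypF k n).
Proof.
move=> p_pr k_gt0 pk; elim/ltn_ind => n IH.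
have [-> | n_gt0] := posnP n; first by rewrite hypF0 p_integral1.
have [R [pR _] AR] := hypF_digit_factor p_pr k_gt0 pk (ltn_pmod n (prime_gt0 p_pr)).
rewrite (divn_eq n p) addnC mulnC AR; apply: (p_integralM p_pr) (pR _).
by apply: IH; rewrite ltn_Pdiv ?(prime_gt1 p_pr).
Qed.

Theorem mainTheorem2 (k p : nat) :
  (2 <= k)%N -> prime p -> odd p -> ~~ (p %| k)%N ->
  (forall n : nat, p_integral p (hypF k n)) /\
  (forall s : nat, (1 <= s)%N -> forall n : nat,
     congr_mod_pow p s
       (sdiv (hypF k) (subst_pow p (hypF k)) n)
       (sdiv (strunc (p ^ s) (hypF k))
             (subst_pow p (strunc (p ^ s.-1) (hypF k))) n)).
Proof.
move=> k_ge2 p_pr _ pk; have k_gt0 : (0 < k)%N by apply: leq_trans k_ge2.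
have p_gt0 := prime_gt0 p_pr.
have F_factor := hypF_digit_factor p_pr k_gt0 pk.
have F_int := p_integral_hypF p_pr k_gt0 pk.
split=> // s s_gt0 n; apply: (congr_mod_sdiv p_pr).
- by rewrite /subst_pow dvdn0 div0n hypF0.
- by rewrite /subst_pow dvdn0 div0n /strunc expn_gt0 p_gt0 hypF0.
- exact: p_integral_subst_pow.
- by apply: p_integral_subst_pow => //; apply: p_integral_strunc.
move=> N; have [R R_lip AR] := F_factor _ (ltn_pmod N p_gt0).
rewrite /congr_mod_pow (smul_strunc_diff p_gt0 s_gt0 AR).
apply: (dwork_congruence_holds p_pr F_int F_factor s_gt0 R_lip).
exact: p_lipschitz_const (p_integral1 p_pr).
Qed.
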